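(* For a metric space $(X,d)$ the following are equivalent: (1) $(X,d)$ is locally compact. (2) $\mathsf{K}(X)$ is a continuous semilattice, and $\xi^\sigma:(X,d)\to\Sigma\,\mathsf{K}((X,d))$, $x\mapsto\{x\}$, is continuous. (3) $\mathsf{K}((X,d))$ is a continuous semilattice, and $(X,d)$ has property Q. (4) $\mathsf{K}((X,d))$ is a continuous semilattice. (5) $(X,d)$ is core compact.
   Context: For a metric space, $\mathsf{K}(X)$ is the set of nonempty compact subsets ordered by reverse inclusion (suprema, when they exist, are intersections). Scott topology on a poset: upper sets $U$ such that every directed $D$ with existing supremum in $U$ meets $U$; $\Sigma Q$ is $Q$ with it. $a\ll b$ means for every directed $D$ with existing $\bigvee D\ge b$ some $d\in D$ has $d\ge a$; $\mathsf{K}(X)$ is a continuous semilattice if it is directed complete and each $K$ is the directed supremum of $\{L:L\ll K\}$. Property Q: for all $K_1,K_2\in\mathsf{K}(X)$, $K_1\ll K_2$ iff $K_2\subseteq\operatorname{int}K_1$. Core compact: the lattice of open sets is a continuous lattice. *)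

From Stdlib Require Import Reals List.
Open Scope R_scope.
Set Implicit Arguments.

Section Order.
Variable T : Type.
Variable le : T -> T -> Prop.

Definition directed (D : T -> Prop) : Prop :=
  (exists a, D a) /\
  (forall a b, D a -> D b -> exists c, D c /\ le a c /\ le b c).

Definition is_sup (D : T -> Prop) (s : T) : Prop :=
  (forall a, D a -> le a s) /\ (forall u, (forall a, D a -> le a u) -> le s u).

Definition way_below (a b : T) : Prop :=
  forall (D : T -> Prop) (s : T), directed D -> is_sup D s -> le b s ->
    exists d, D d /\ le a d.

Definition directed_complete : Prop :=
  forall D, directed D -> exists s, is_sup D s.

Definition complete_lattice : Prop :=
  forall D : T -> Prop, exists s, is_sup D s.

Definition approximated : Prop :=
  forall x, directed (fun y => way_below y x) /\ is_sup (fun y => way_below y x) x.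

Definition continuous_semilattice : Prop := directed_complete /\ approximated.

Definition continuous_lattice : Prop := complete_lattice /\ approximated.

Definition scott_open (U : T -> Prop) : Prop :=
  (forall a b, U a -> le a b -> U b) /\
  (forall D s, directed D -> is_sup D s -> U s -> exists d, D d /\ U d).
End Order.

Section Metric.
Variable X : Type.
Variable d : X -> X -> R.

Definition is_metric : Prop :=
  (forall x y, 0 <= d x y) /\
  (forall x y, d x y = 0 <-> x = y) /\
  (forall x y, d x y = d y x) /\
  (forall x y z, d x z <= d x y + d y z).

Definition open (U : X -> Prop) : Prop :=
  forall x, U x -> exists r, 0 < r /\ forall y, d x y < r -> U y.

Definition interior (A : X -> Prop) (x : X) : Prop :=
  exists U, open U /\ U x /\ forall y, U y -> A y.

Definition compact (K : X -> Prop) : Prop :=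
  forall (I : Type) (U : I -> X -> Prop),
    (forall i, open (U i)) -> (forall x, K x -> exists i, U i x) ->
    exists l : list I, forall x, K x -> exists i, In i l /\ U i x.

Definition locally_compact : Prop :=
  forall x, exists K, compact K /\ interior K x.

(* K(X): nonempty compact subsets, ordered by reverse inclusion *)
Definition KX : Type := { K : X -> Prop | (exists x, K x) /\ compact K }.

Definition KX_le (K1 K2 : KX) : Prop :=
  forall x, proj1_sig K2 x -> proj1_sig K1 x.

Lemma singleton_nonempty_compact (x : X) :
  (exists y, x = y) /\ compact (fun y => x = y).
Proof.
  split; [exists x; reflexivity|].
  intros I U _ Hcov. destruct (Hcov x eq_refl) as [i Hi].
  exists (i :: nil). intros y <-. exists i. split; [left; reflexivity | exact Hi].
Qed.

Definition xi (x : X) : KX :=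
  exist _ (fun y => x = y) (singleton_nonempty_compact x).

Definition xi_sigma_continuous : Prop :=
  forall U : KX -> Prop, scott_open KX_le U -> open (fun x => U (xi x)).

Definition property_Q : Prop :=
  forall K1 K2 : KX,
    way_below KX_le K1 K2 <-> (forall x, proj1_sig K2 x -> interior (proj1_sig K1) x).

Definition OX : Type := { U : X -> Prop | open U }.

Definition OX_le (U V : OX) : Prop := forall x, proj1_sig U x -> proj1_sig V x.

Definition core_compact : Prop := continuous_lattice OX_le.
End Metric.

From Stdlib Require Import Reals List Arith Lra Lia Classical ClassicalEpsilon.
From Stdlib Require Import FunctionalExtensionality PropExtensionality.
Open Scope R_scope.

(* Directed suprema in
   K(X) are intersections, and a directed family of compact sets whose
   intersection lies in an open set U has a member inside U; hence a compact
   neighbourhood of K is way below K, and under local compactness these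
   neighbourhoods form a directed family with supremum K, which gives the
   continuity of K(X), property Q and the Scott continuity of x |-> {x}.
   Conversely, if L is way below {x} but not a neighbourhood of x, a sequence
   outside L converging to x has compact tails {x} U {x_n : n >= N} whose
   supremum is {x}, so some tail lies in L, which is absurd.  For core
   compactness, interiors of compact sets inside V are way below V, and an
   open W way below X forces every closed subset of W to be compact. *)

Lemma not_forall_in {J : Type} (P Q : J -> Prop) :
  ~ (forall j, P j -> Q j) -> exists j, P j /\ ~ Q j.
Proof.
  intros H. apply NNPP; intro Hno. apply H; intros j Hj.
  apply NNPP; intro Nj. apply Hno; exists j; split; assumption.
Qed.

Lemma list_pos_lower_bound {I : Type} (f : I -> R) (l : list I) :
  (forall i, In i l -> 0 < f i) -> exists r, 0 < r /\ forall i, In i l -> r <= f i.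
Proof.
  induction l as [|a l IH]; intros Hpos.
  - exists 1; split; [lra | intros i []].
  - destruct IH as (r & Hr & H); [intros i Hi; apply Hpos; right; exact Hi|].
    exists (Rmin r (f a)); split.
    + apply Rmin_pos; [exact Hr|apply Hpos; left; reflexivity].
    + intros i [<-|Hi]; [apply Rmin_r|]. eapply Rle_trans; [apply Rmin_l|auto].
Qed.

Lemma inv_succ_small (r : R) : 0 < r -> exists N, forall n, (N <= n)%nat -> / (INR n + 1) < r.
Proof.
  intros Hr. destruct (archimed_cor1 r Hr) as (N & HN & HN0).
  exists N. intros n Hn. apply Rle_lt_trans with (/ INR N); [|exact HN].
  apply Rinv_le_contravar; [apply lt_0_INR; exact HN0|].
  apply le_INR in Hn. lra.
Qed.

Section OrderFacts.
Context {T : Type} {le : T -> T -> Prop}.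

Lemma way_below_le (a b : T) : le b b -> way_below le a b -> le a b.
Proof.
  intros Hbb Hab.
  assert (Hdir : directed le (eq b)).
  { split; [exists b; reflexivity|]. intros a1 a2 <- <-. exists b; repeat split; exact Hbb. }
  assert (Hsup : is_sup le (eq b) b).
  { split; [intros c <-; exact Hbb | intros u Hu; exact (Hu b eq_refl)]. }
  destruct (Hab (eq b) b Hdir Hsup Hbb) as (c & <- & Hac). exact Hac.
Qed.

Hypothesis le_tr : forall a b c, le a b -> le b c -> le a c.

Lemma directed_upper_bound_list (D : T -> Prop) (a0 : T) (l : list T) :
  directed le D -> D a0 -> (forall a, In a l -> D a) ->
  exists c, D c /\ le a0 c /\ forall a, In a l -> le a c.
Proof.
  intros [_ Hup] Ha0. induction l as [|b l IH]; intros Hl.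
  - destruct (Hup a0 a0 Ha0 Ha0) as (c & Hc & H & _).
    exists c; repeat split; [exact Hc|exact H|intros a []].
  - destruct IH as (c & Hc & H0 & H); [intros a Ha; apply Hl; right; exact Ha|].
    destruct (Hup c b Hc (Hl b (or_introl eq_refl))) as (c' & Hc' & H1 & H2).
    exists c'; repeat split; [exact Hc'|eauto|].
    intros a [<-|Ha]; eauto.
Qed.
End OrderFacts.

Section Metric.
Context {X : Type} (d : X -> X -> R) (Hd : is_metric d).

Local Notation ball x r := (fun y => d x y < r).
Local Notation closed_ball x r := (fun y => d x y <= r).

Lemma dist_self x : d x x = 0.
Proof. exact (proj2 (proj1 (proj2 Hd) x x) eq_refl). Qed.

Lemma dist_pos x y : x <> y -> 0 < d x y.
Proof.
  intros Hxy. destruct (Rle_lt_or_eq_dec 0 (d x y) (proj1 Hd x y)) as [H|H]; [exact H|].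
  exfalso; apply Hxy, (proj1 (proj2 Hd)). symmetry; exact H.
Qed.

Lemma dist_triangle x y z : d x z <= d x y + d y z.
Proof. exact (proj2 (proj2 (proj2 Hd)) x y z). Qed.

Lemma dist_triangle_sym x y z : d x z <= d x y + d z y.
Proof. rewrite (proj1 (proj2 (proj2 Hd)) z y). apply dist_triangle. Qed.

Definition closed (A : X -> Prop) : Prop := open d (fun x => ~ A x).

Lemma ball_open x r : open d (ball x r).
Proof.
  intros y Hy. exists (r - d x y). split; [lra|].
  intros z Hz. pose proof (dist_triangle x y z). lra.
Qed.

Lemma closed_ball_closed x r : closed (closed_ball x r).
Proof.
  intros y Hy. exists (d x y - r). split; [lra|].
  intros z Hz Hz'. pose proof (dist_triangle_sym x z y). lra.
Qed.

Lemma open_full : open d (fun _ => True).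
Proof. intros x _. exists 1; split; [lra|auto]. Qed.

Lemma open_inter (U V : X -> Prop) : open d U -> open d V -> open d (fun x => U x /\ V x).
Proof.
  intros HU HV x [Ux Vx].
  destruct (HU x Ux) as (r1 & Hr1 & H1). destruct (HV x Vx) as (r2 & Hr2 & H2).
  exists (Rmin r1 r2); split; [apply Rmin_pos; assumption|].
  intros y Hy. pose proof (Rmin_l r1 r2); pose proof (Rmin_r r1 r2).
  split; [apply H1|apply H2]; lra.
Qed.

Lemma open_or (U V : X -> Prop) : open d U -> open d V -> open d (fun x => U x \/ V x).
Proof.
  intros HU HV x [Ux|Vx].
  - destruct (HU x Ux) as (r & Hr & H). exists r; split; [exact Hr|intros y Hy; left; auto].
  - destruct (HV x Vx) as (r & Hr & H). exists r; split; [exact Hr|intros y Hy; right; auto].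
Qed.

Lemma open_union {J : Type} (P : J -> Prop) (F : J -> X -> Prop) :
  (forall j, P j -> open d (F j)) -> open d (fun z => exists j, P j /\ F j z).
Proof.
  intros HF z (j & Hj & Hz). destruct (HF j Hj z Hz) as (r & Hr & H).
  exists r; split; [exact Hr|]. intros y Hy; exists j; auto.
Qed.

Lemma closed_family_inter {J : Type} (P : J -> Prop) (F : J -> X -> Prop) :
  (forall j, P j -> closed (F j)) -> closed (fun x => forall j, P j -> F j x).
Proof.
  intros HF y Hy. destruct (not_forall_in P (fun j => F j y) Hy) as (j & Hj & Hjy).
  destruct (HF j Hj y Hjy) as (r & Hr & H).
  exists r; split; [exact Hr|]. intros z Hz Hall. exact (H z Hz (Hall j Hj)).
Qed.

Lemma interior_open (A : X -> Prop) : open d (interior d A).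
Proof.
  intros x (U & HU & Ux & HUA). destruct (HU x Ux) as (r & Hr & H).
  exists r; split; [exact Hr|]. intros y Hy. exists U; auto.
Qed.

Lemma interior_sub (A : X -> Prop) x : interior d A x -> A x.
Proof. intros (U & _ & Ux & HUA); auto. Qed.

Lemma interior_mono (A B : X -> Prop) x :
  (forall y, A y -> B y) -> interior d A x -> interior d B x.
Proof. intros HAB (U & HU & Ux & HUA). exists U; auto. Qed.

Lemma compact_closed (K : X -> Prop) : compact d K -> closed K.
Proof.
  intros HK y Ky.
  assert (Hpos : forall x, K x -> 0 < d x y) by (intros x Kx; apply dist_pos; intros <-; contradiction).
  destruct (HK {x | K x} (fun i => ball (proj1_sig i) (d (proj1_sig i) y / 2))) as (l & Hl).
  - intros i. apply ball_open.
  - intros x Kx. exists (exist _ x Kx). simpl. rewrite dist_self.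
    pose proof (Hpos x Kx). lra.
  - destruct (list_pos_lower_bound (fun i : {x | K x} => d (proj1_sig i) y / 2) l) as (r & Hr & Hm).
    + intros [x Kx] _. simpl. pose proof (Hpos x Kx). lra.
    + exists r. split; [exact Hr|]. intros z Hz Kz.
      destruct (Hl z Kz) as ([x Kx] & Hi & Hxz). specialize (Hm _ Hi). simpl in Hxz, Hm.
      pose proof (dist_triangle_sym x z y). lra.
Qed.

Lemma closed_subset_compact (A K : X -> Prop) :
  closed A -> (forall x, A x -> K x) -> compact d K -> compact d A.
Proof.
  intros HA HAK HK J U HU Hc.
  destruct (HK (option J) (fun o z => match o with Some j => U j z | None => ~ A z end)) as (l & Hl).
  - intros [j|]; [apply HU|exact HA].
  - intros x _. destruct (classic (A x)) as [Ax|Ax].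
    + destruct (Hc x Ax) as (j & Hj). exists (Some j); exact Hj.
    + exists None; exact Ax.
  - exists (flat_map (fun o => match o with Some j => j :: nil | None => nil end) l).
    intros x Ax. destruct (Hl x (HAK x Ax)) as ([j|] & Hj & Hx); [|contradiction].
    exists j; split; [|exact Hx].
    apply in_flat_map. exists (Some j); split; [exact Hj|left; reflexivity].
Qed.

Lemma compact_list_union {I : Type} (l : list I) (F : I -> X -> Prop) :
  (forall i, In i l -> compact d (F i)) -> compact d (fun z => exists i, In i l /\ F i z).
Proof.
  intros HF J U HU. revert HF. induction l as [|a l IH]; intros HF Hc.
  - exists nil. intros x (i & [] & _).
  - destruct (HF a (or_introl eq_refl) J U HU) as (la & Hla).
    { intros x Hx. apply Hc. exists a; split; [left; reflexivity|exact Hx]. }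
    destruct IH as (ll & Hll).
    + intros i Hi; apply HF; right; exact Hi.
    + intros x (i & Hi & Hx); apply Hc; exists i; split; [right; exact Hi|exact Hx].
    + exists (la ++ ll). intros x (i & [<-|Hi] & Hx).
      * destruct (Hla x Hx) as (j & Hj & Hjx).
        exists j; split; [apply in_or_app; left; exact Hj|exact Hjx].
      * destruct (Hll x (ex_intro _ i (conj Hi Hx))) as (j & Hj & Hjx).
        exists j; split; [apply in_or_app; right; exact Hj|exact Hjx].
Qed.

Lemma compact_finite_image (f : nat -> X) (N M : nat) :
  compact d (fun z => exists n, (N <= n < M)%nat /\ z = f n).
Proof.
  intros J U _. induction M as [|M IH]; intros Hc.
  - exists nil. intros z (n & Hn & _). lia.
  - destruct IH as (l & Hl).
    { intros z (n & Hn & ->). apply Hc. exists n; split; [lia|reflexivity]. }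
    destruct (le_lt_dec N M) as [HNM|HMN].
    + destruct (Hc (f M)) as (j & Hj); [exists M; split; [lia|reflexivity]|].
      exists (j :: l). intros z (n & Hn & ->).
      destruct (Nat.eq_dec n M) as [->|Hne]; [exists j; split; [left; reflexivity|exact Hj]|].
      destruct (Hl (f n)) as (j' & Hj' & Hj'n); [exists n; split; [lia|reflexivity]|].
      exists j'; split; [right; exact Hj'|exact Hj'n].
    + exists l. intros z (n & Hn & ->). apply Hl. exists n; split; [lia|reflexivity].
Qed.

Lemma KX_le_refl (K : KX d) : KX_le K K.
Proof. intros x Kx; exact Kx. Qed.

Lemma KX_le_trans (K1 K2 K3 : KX d) : KX_le K1 K2 -> KX_le K2 K3 -> KX_le K1 K3.
Proof. intros H12 H23 x Hx. exact (H12 x (H23 x Hx)). Qed.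

(** * Directed suprema in K(X) *)

Lemma directed_compacts_in_open (D : KX d -> Prop) (U : X -> Prop) :
  directed (KX_le (d:=d)) D -> open d U -> (forall x, (forall K, D K -> proj1_sig K x) -> U x) ->
  exists K, D K /\ forall x, proj1_sig K x -> U x.
Proof.
  intros HD HU Hinter. destruct (proj1 HD) as (K0 & HK0).
  destruct (proj2 (proj2_sig K0) (option {K : KX d | D K})
     (fun o z => match o with Some K => ~ proj1_sig (proj1_sig K) z | None => U z end)) as (l & Hl).
  - intros [[K HK]|]; [|exact HU]. apply compact_closed, (proj2_sig K).
  - intros x _. destruct (classic (U x)) as [Ux|Ux]; [exists None; exact Ux|].
    destruct (not_forall_in D (fun K => proj1_sig K x) (fun H => Ux (Hinter x H))) as (K & HK & Kx).
    exists (Some (exist _ K HK)); exact Kx.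
  - set (Ks := flat_map (fun o => match o with Some K => proj1_sig K :: nil | None => nil end) l).
    destruct (directed_upper_bound_list KX_le_trans D K0 Ks HD HK0) as (C & HC & HC0 & HCs).
    + intros K HK. apply in_flat_map in HK as ([[K' HK']|] & _ & HKK'); [|contradiction].
      destruct HKK' as [<-|[]]; exact HK'.
    + exists C; split; [exact HC|]. intros x Cx.
      destruct (Hl x (HC0 x Cx)) as ([[K HK]|] & Hi & HKx); [|exact HKx].
      exfalso; apply HKx, (HCs K); [|exact Cx].
      apply in_flat_map. exists (Some (exist _ K HK)); split; [exact Hi|left; reflexivity].
Qed.

Lemma directed_compacts_inter (D : KX d -> Prop) : directed (KX_le (d:=d)) D ->
  (exists x, forall K, D K -> proj1_sig K x) /\ compact d (fun x => forall K, D K -> proj1_sig K x).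
Proof.
  intros HD. split.
  - apply NNPP; intro Hempty.
    destruct (directed_compacts_in_open D (fun _ => False) HD) as (K & _ & HK).
    + intros x [].
    + intros x Hx; apply Hempty; exists x; exact Hx.
    + destruct (proj1 (proj2_sig K)) as (x & Kx). exact (HK x Kx).
  - destruct (proj1 HD) as (K0 & HK0).
    apply closed_subset_compact with (K := proj1_sig K0).
    + apply closed_family_inter. intros K _. apply compact_closed, (proj2_sig K).
    + intros x Hx; exact (Hx K0 HK0).
    + exact (proj2 (proj2_sig K0)).
Qed.

Definition KX_inter (D : KX d -> Prop) (HD : directed (KX_le (d:=d)) D) : KX d :=
  exist _ (fun x => forall K, D K -> proj1_sig K x) (directed_compacts_inter D HD).

Lemma KX_inter_sup (D : KX d -> Prop) (HD : directed (KX_le (d:=d)) D) :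
  is_sup (KX_le (d:=d)) D (KX_inter D HD).
Proof.
  split.
  - intros K HK x Hx. exact (Hx K HK).
  - intros S HS x Sx K HK. exact (HS K HK x Sx).
Qed.

Lemma KX_directed_complete : directed_complete (KX_le (d:=d)).
Proof. intros D HD. exists (KX_inter D HD). apply KX_inter_sup. Qed.

Lemma directed_sup_contains_inter (D : KX d -> Prop) (S : KX d) :
  directed (KX_le (d:=d)) D -> is_sup (KX_le (d:=d)) D S ->
  forall x, (forall K, D K -> proj1_sig K x) -> proj1_sig S x.
Proof.
  intros HD [_ HS] x Hx. exact (HS (KX_inter D HD) (proj1 (KX_inter_sup D HD)) x Hx).
Qed.

Definition compact_nbhd (K M : KX d) : Prop :=
  forall x, proj1_sig K x -> interior d (proj1_sig M) x.

Lemma way_below_of_compact_nbhd (K M : KX d) : compact_nbhd K M -> way_below (KX_le (d:=d)) M K.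
Proof.
  intros HKM D S HD HS HKS.
  destruct (directed_compacts_in_open D (interior d (proj1_sig M)) HD (interior_open _))
    as (C & HC & HCM).
  - intros x Hx. apply HKM, HKS, (directed_sup_contains_inter D S HD HS x Hx).
  - exists C; split; [exact HC|]. intros x Cx. exact (interior_sub _ _ (HCM x Cx)).
Qed.

(** * Local compactness *)

Section LocallyCompact.
Hypothesis Hlc : locally_compact d.

Lemma lc_compact_ball_in_open (U : X -> Prop) x : open d U -> U x ->
  exists r, 0 < r /\ compact d (closed_ball x r) /\ forall z, d x z <= r -> U z.
Proof.
  intros HU Ux.
  destruct (Hlc x) as (C & HC & V & HV & Vx & VC).
  destruct (HV x Vx) as (r1 & Hr1 & H1). destruct (HU x Ux) as (r2 & Hr2 & H2).
  assert (Hr : 0 < Rmin r1 r2 / 2 /\ Rmin r1 r2 / 2 < r1 /\ Rmin r1 r2 / 2 < r2).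
  { pose proof (Rmin_l r1 r2). pose proof (Rmin_r r1 r2). pose proof (Rmin_pos r1 r2 Hr1 Hr2). lra. }
  exists (Rmin r1 r2 / 2). split; [apply Hr|split].
  - apply closed_subset_compact with (K := C); [apply closed_ball_closed| |exact HC].
    intros z Hz. apply VC, H1. lra.
  - intros z Hz. apply H2. lra.
Qed.

Lemma lc_compact_nbhd_in_open (K U : X -> Prop) : compact d K -> open d U ->
  (forall x, K x -> U x) ->
  exists L, compact d L /\ (forall x, K x -> interior d L x) /\ (forall x, L x -> U x).
Proof.
  intros HK HU HKU.
  set (I := {p : X * R | 0 < snd p /\ compact d (closed_ball (fst p) (snd p)) /\
                         forall z, d (fst p) z <= snd p -> U z}).
  destruct (HK I (fun p => ball (fst (proj1_sig p)) (snd (proj1_sig p)))) as (l & Hl).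
  - intros p; apply ball_open.
  - intros x Kx. destruct (lc_compact_ball_in_open U x HU (HKU x Kx)) as (r & Hr & Hc & HrU).
    exists (exist _ (x, r) (conj Hr (conj Hc HrU)) : I). simpl. rewrite dist_self. exact Hr.
  - exists (fun z => exists p, In p l /\ d (fst (proj1_sig p)) z <= snd (proj1_sig p)).
    split; [|split].
    + apply (compact_list_union l (fun p => closed_ball (fst (proj1_sig p)) (snd (proj1_sig p)))).
      intros p _. exact (proj1 (proj2 (proj2_sig p))).
    + intros x Kx. exists (fun z => exists p, In p l /\ d (fst (proj1_sig p)) z < snd (proj1_sig p)).
      split; [|split].
      * apply (open_union (fun p => In p l) (fun p => ball (fst (proj1_sig p)) (snd (proj1_sig p)))).
        intros p _. apply ball_open.
      * exact (Hl x Kx).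
      * intros z (p & Hp & Hz). exists p; split; [exact Hp|lra].
    + intros z (p & _ & Hz). exact (proj2 (proj2 (proj2_sig p)) z Hz).
Qed.

Lemma lc_compact_nbhd_KX (K : KX d) (U : X -> Prop) : open d U -> (forall x, proj1_sig K x -> U x) ->
  exists M, compact_nbhd K M /\ forall x, proj1_sig M x -> U x.
Proof.
  intros HU HKU.
  destruct (lc_compact_nbhd_in_open _ U (proj2 (proj2_sig K)) HU HKU) as (L & HL & HKL & HLU).
  destruct (proj1 (proj2_sig K)) as (x & Kx).
  exists (exist _ L (conj (ex_intro _ x (interior_sub _ _ (HKL x Kx))) HL)).
  split; [exact HKL|exact HLU].
Qed.

Lemma compact_nbhds_directed (K : KX d) : directed (KX_le (d:=d)) (compact_nbhd K).
Proof.
  split.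
  - destruct (lc_compact_nbhd_KX K (fun _ => True)) as (M & HM & _);
      [exact open_full|auto|exists M; exact HM].
  - intros M1 M2 H1 H2.
    destruct (lc_compact_nbhd_KX K (fun x => interior d (proj1_sig M1) x /\ interior d (proj1_sig M2) x))
      as (M & HM & HMU).
    + apply open_inter; apply interior_open.
    + intros x Kx; split; [apply H1|apply H2]; exact Kx.
    + exists M. split; [exact HM|split]; intros x Mx.
      * exact (interior_sub _ _ (proj1 (HMU x Mx))).
      * exact (interior_sub _ _ (proj2 (HMU x Mx))).
Qed.

Lemma compact_nbhds_sup (K : KX d) : is_sup (KX_le (d:=d)) (compact_nbhd K) K.
Proof.
  split.
  - intros M HM x Kx. exact (interior_sub _ _ (HM x Kx)).
  - intros S HS y Sy. apply NNPP; intro Ky.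
    destruct (lc_compact_nbhd_KX K (fun z => ~ y = z)) as (M & HM & HMy).
    + exact (compact_closed _ (proj2 (singleton_nonempty_compact d y))).
    + intros z Kz <-. exact (Ky Kz).
    + exact (HMy y (HS M HM y Sy) eq_refl).
Qed.

Lemma way_below_iff_compact_nbhd (K M : KX d) : way_below (KX_le (d:=d)) M K <-> compact_nbhd K M.
Proof.
  split; [|apply way_below_of_compact_nbhd].
  intros HMK x Kx.
  destruct (HMK (compact_nbhd K) K (compact_nbhds_directed K) (compact_nbhds_sup K) (KX_le_refl K))
    as (N & HN & HMN).
  exact (interior_mono _ _ _ HMN (HN x Kx)).
Qed.

Lemma lc_property_Q : property_Q d.
Proof. intros K1 K2. exact (way_below_iff_compact_nbhd K2 K1). Qed.

Lemma lc_continuous_semilattice : continuous_semilattice (KX_le (d:=d)).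
Proof.
  split; [exact KX_directed_complete|]. intros K.
  assert (E : (fun M => way_below (KX_le (d:=d)) M K) = compact_nbhd K).
  { apply functional_extensionality; intro M. apply propositional_extensionality.
    apply way_below_iff_compact_nbhd. }
  rewrite E. split; [apply compact_nbhds_directed|apply compact_nbhds_sup].
Qed.

Lemma lc_xi_sigma_continuous : xi_sigma_continuous d.
Proof.
  intros U [Hup Hscott] x Ux.
  destruct (Hscott _ _ (compact_nbhds_directed (xi d x)) (compact_nbhds_sup (xi d x)) Ux)
    as (M & HM & UM).
  destruct (HM x eq_refl) as (V & HV & Vx & VM).
  destruct (HV x Vx) as (r & Hr & Hball).
  exists r; split; [exact Hr|]. intros y Hy. apply (Hup M (xi d y) UM).
  intros z <-. exact (VM y (Hball y Hy)).
Qed.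

End LocallyCompact.

(** * Tails of convergent sequences *)

Definition converges_to (f : nat -> X) (x : X) : Prop :=
  forall r, 0 < r -> exists N, forall n, (N <= n)%nat -> d x (f n) < r.

Lemma converges_tail_compact (f : nat -> X) (x : X) (N : nat) : converges_to f x ->
  compact d (fun z => z = x \/ exists n, (N <= n)%nat /\ z = f n).
Proof.
  intros Hf J U HU Hc.
  destruct (Hc x (or_introl eq_refl)) as (j0 & Hj0).
  destruct (HU j0 x Hj0) as (r & Hr & Hball).
  destruct (Hf r Hr) as (M & HM).
  destruct (compact_finite_image f N M J U HU) as (l & Hl).
  - intros z (n & Hn & ->). apply Hc. right. exists n; split; [lia|reflexivity].
  - exists (j0 :: l). intros z [->|(n & Hn & ->)].
    + exists j0; split; [left; reflexivity|exact Hj0].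
    + destruct (le_lt_dec M n) as [HMn|HnM].
      * exists j0; split; [left; reflexivity|]. exact (Hball _ (HM n HMn)).
      * destruct (Hl (f n)) as (j & Hj & Hjn); [exists n; split; [lia|reflexivity]|].
        exists j; split; [right; exact Hj|exact Hjn].
Qed.

Section Tails.
Variables (f : nat -> X) (x : X).
Hypothesis Hf : converges_to f x.

Definition tail (N : nat) : KX d :=
  exist (fun K => (exists y, K y) /\ compact d K)
    (fun z => z = x \/ exists n, (N <= n)%nat /\ z = f n)
    (conj (ex_intro _ x (or_introl eq_refl)) (converges_tail_compact f x N Hf)).

Lemma tails_directed : directed (KX_le (d:=d)) (fun K => exists N, K = tail N).
Proof.
  split; [exists (tail 0), 0%nat; reflexivity|].
  intros K1 K2 (N1 & ->) (N2 & ->). exists (tail (Nat.max N1 N2)).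
  split; [exists (Nat.max N1 N2); reflexivity|].
  split; intros z [->|(n & Hn & ->)];
    (left; reflexivity) || (right; exists n; split; [lia|reflexivity]).
Qed.

Lemma tails_sup : is_sup (KX_le (d:=d)) (fun K => exists N, K = tail N) (xi d x).
Proof.
  split.
  - intros K (N & ->) z <-. left; reflexivity.
  - intros S HS y Sy. apply NNPP; intro Hxy.
    destruct (Hf (d x y) (dist_pos x y Hxy)) as (N & HN).
    destruct (HS (tail N) (ex_intro _ N eq_refl) y Sy) as [->|(n & Hn & ->)].
    + exact (Hxy eq_refl).
    + specialize (HN n Hn). lra.
Qed.
End Tails.

Lemma not_interior_sequence (A : X -> Prop) x : ~ interior d A x ->
  exists f, converges_to f x /\ forall n, ~ A (f n).
Proof.
  intros Hint.
  assert (Hpt : forall n : nat, exists y, d x y < / (INR n + 1) /\ ~ A y).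
  { intros n. apply NNPP; intro Hno. apply Hint.
    exists (ball x (/ (INR n + 1))). split; [apply ball_open|split].
    - cbv beta. rewrite dist_self. apply Rinv_0_lt_compat. pose proof (pos_INR n). lra.
    - intros y Hy. apply NNPP; intro Ny. apply Hno. exists y; split; assumption. }
  destruct (choice (fun n y => d x y < / (INR n + 1) /\ ~ A y) Hpt) as (f & Hf).
  exists f. split; [|intros n; apply Hf].
  intros r Hr. destruct (inv_succ_small r Hr) as (N & HN). exists N.
  intros n Hn. pose proof (proj1 (Hf n)). pose proof (HN n Hn). lra.
Qed.

Lemma interior_of_way_below_point (L : KX d) x :
  way_below (KX_le (d:=d)) L (xi d x) -> interior d (proj1_sig L) x.
Proof.
  intros HL. apply NNPP; intro Hint.
  destruct (not_interior_sequence _ x Hint) as (f & Hf & HfL).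
  destruct (HL _ _ (tails_directed f x Hf) (tails_sup f x Hf) (KX_le_refl _))
    as (K & (N & ->) & HLK).
  apply (HfL N), HLK. right. exists N; split; [lia|reflexivity].
Qed.

Lemma continuous_semilattice_lc : continuous_semilattice (KX_le (d:=d)) -> locally_compact d.
Proof.
  intros [_ Happrox] x.
  destruct (Happrox (xi d x)) as [[[L HL] _] _].
  exists (proj1_sig L). split; [exact (proj2 (proj2_sig L))|].
  exact (interior_of_way_below_point L x HL).
Qed.

(** * The lattice of open sets *)

Lemma OX_le_refl (U : OX d) : OX_le U U.
Proof. intros x Ux; exact Ux. Qed.

Lemma OX_le_trans (U V W : OX d) : OX_le U V -> OX_le V W -> OX_le U W.
Proof. intros HUV HVW x Ux. exact (HVW x (HUV x Ux)). Qed.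

Definition OX_union (D : OX d -> Prop) : OX d :=
  exist _ (fun z => exists U, D U /\ proj1_sig U z)
    (open_union D (fun U => proj1_sig U) (fun U _ => proj2_sig U)).

Lemma OX_union_sup (D : OX d -> Prop) : is_sup (OX_le (d:=d)) D (OX_union D).
Proof.
  split.
  - intros U HU z Uz. exists U; split; assumption.
  - intros S HS z (U & HU & Uz). exact (HS U HU z Uz).
Qed.

Lemma OX_sup_sub_union (D : OX d -> Prop) (S : OX d) : is_sup (OX_le (d:=d)) D S ->
  forall z, proj1_sig S z -> exists U, D U /\ proj1_sig U z.
Proof. intros [_ HS] z Sz. exact (HS (OX_union D) (proj1 (OX_union_sup D)) z Sz). Qed.

Lemma compact_between_way_below (W V : OX d) (L : X -> Prop) : compact d L ->
  (forall x, proj1_sig W x -> L x) -> (forall x, L x -> proj1_sig V x) -> way_below (OX_le (d:=d)) W V.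
Proof.
  intros HL HWL HLV D S HD HS HVS.
  destruct (HL {U : OX d | D U} (fun U => proj1_sig (proj1_sig U))) as (l & Hl).
  - intros U; exact (proj2_sig (proj1_sig U)).
  - intros z Lz. destruct (OX_sup_sub_union D S HS z (HVS z (HLV z Lz))) as (U & HU & Uz).
    exists (exist _ U HU); exact Uz.
  - destruct (proj1 HD) as (U0 & HU0).
    destruct (directed_upper_bound_list OX_le_trans D U0 (map (@proj1_sig _ _) l) HD HU0)
      as (C & HC & _ & HCl).
    + intros U HU. apply in_map_iff in HU as ([U' HU'] & <- & _). exact HU'.
    + exists C; split; [exact HC|]. intros z Wz.
      destruct (Hl z (HWL z Wz)) as ([U HU] & Hi & Uz).
      apply (HCl U); [|exact Uz].
      apply in_map_iff. exists (exist _ U HU); split; [reflexivity|exact Hi].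
Qed.

Lemma way_below_closed_subset_compact (W V : OX d) (C : X -> Prop) :
  way_below (OX_le (d:=d)) W V -> closed C -> (forall x, C x -> proj1_sig W x) -> compact d C.
Proof.
  intros HWV HC HCW J U HU Hcov.
  assert (HO : forall l : list J, open d (fun z => ~ C z \/ exists j, In j l /\ U j z)).
  { intros l. apply open_or; [exact HC|].
    apply (open_union (fun j => In j l) U). intros j _; apply HU. }
  (* Finite subfamilies of the cover, completed by the complement of C, form a
     directed family of open sets with union X. *)
  set (cover := fun l => exist _ _ (HO l) : OX d).
  set (D := fun A : OX d => exists l, A = cover l).
  assert (HD : directed (OX_le (d:=d)) D).
  { split; [exists (cover nil), nil; reflexivity|].
    intros A1 A2 (l1 & ->) (l2 & ->). exists (cover (l1 ++ l2)).
    split; [exists (l1 ++ l2); reflexivity|].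
    split; intros z [Hz|(j & Hj & Hz)]; try (left; exact Hz);
      right; exists j; (split; [apply in_or_app; auto|exact Hz]). }
  assert (HS : is_sup (OX_le (d:=d)) D (exist _ _ open_full)).
  { split; [intros A _ z _; exact Logic.I|].
    intros A HA z _. destruct (classic (C z)) as [Cz|Cz].
    - destruct (Hcov z Cz) as (j & Hj).
      apply (HA (cover (j :: nil))); [exists (j :: nil); reflexivity|].
      right; exists j; split; [left; reflexivity|exact Hj].
    - apply (HA (cover nil)); [exists nil; reflexivity|]. left; exact Cz. }
  destruct (HWV D _ HD HS (fun z _ => Logic.I)) as (A & (l & ->) & HWA).
  exists l. intros z Cz. destruct (HWA z (HCW z Cz)) as [Hz|Hz]; [contradiction|exact Hz].
Qed.

Lemma lc_core_compact : locally_compact d -> core_compact d.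
Proof.
  intros Hlc. split; [intros D; exists (OX_union D); apply OX_union_sup|].
  intros V. split; [split|split].
  - assert (Hempty : open d (fun _ => False)) by (intros x []).
    exists (exist _ _ Hempty). intros D S HD _ _.
    destruct (proj1 HD) as (U & HU). exists U; split; [exact HU|intros z []].
  - intros W1 W2 H1 H2.
    exists (exist _ _ (open_or _ _ (proj2_sig W1) (proj2_sig W2))).
    split; [|split; intros z Hz; [left|right]; exact Hz].
    intros D S HD HS HVS.
    destruct (H1 D S HD HS HVS) as (U1 & HU1 & HW1).
    destruct (H2 D S HD HS HVS) as (U2 & HU2 & HW2).
    destruct (proj2 HD U1 U2 HU1 HU2) as (U & HU & HU1U & HU2U).
    exists U; split; [exact HU|].
    intros z [Hz|Hz]; [exact (HU1U z (HW1 z Hz))|exact (HU2U z (HW2 z Hz))].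
  - intros W HW. exact (way_below_le _ _ (OX_le_refl V) HW).
  - intros S HS x Vx.
    destruct (lc_compact_nbhd_in_open Hlc (fun y => x = y) (proj1_sig V)
                (proj2 (singleton_nonempty_compact d x)) (proj2_sig V)) as (L & HL & HxL & HLV).
    { intros y <-; exact Vx. }
    apply (HS (exist _ _ (interior_open L))); [|exact (HxL x eq_refl)].
    apply (compact_between_way_below _ V L HL); [intros z; apply interior_sub|exact HLV].
Qed.

Lemma core_compact_lc : core_compact d -> locally_compact d.
Proof.
  intros [_ Happrox] x.
  destruct (Happrox (exist _ _ open_full)) as [_ HS].
  destruct (OX_sup_sub_union _ _ HS x Logic.I) as (W & HW & Wx).
  destruct (proj2_sig W x Wx) as (r & Hr & Hball).
  exists (closed_ball x (r / 2)). split.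
  - apply (way_below_closed_subset_compact W _ _ HW); [apply closed_ball_closed|].
    intros z Hz. apply Hball. lra.
  - exists (ball x (r / 2)). split; [apply ball_open|split]; [cbv beta; rewrite dist_self; lra|].
    intros y Hy; lra.
Qed.

End Metric.

Theorem mainTheorem15 (X : Type) (d : X -> X -> R) (Hd : is_metric d) :
  (locally_compact d <->
     (continuous_semilattice (KX_le (d:=d)) /\ xi_sigma_continuous d)) /\
  ((continuous_semilattice (KX_le (d:=d)) /\ xi_sigma_continuous d) <->
     (continuous_semilattice (KX_le (d:=d)) /\ property_Q d)) /\
  ((continuous_semilattice (KX_le (d:=d)) /\ property_Q d) <->
     continuous_semilattice (KX_le (d:=d))) /\
  (continuous_semilattice (KX_le (d:=d)) <-> core_compact d).
Proof.
  pose proof (continuous_semilattice_lc d Hd).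
  pose proof (lc_continuous_semilattice d Hd).
  pose proof (lc_xi_sigma_continuous d Hd).
  pose proof (lc_property_Q d Hd).
  pose proof (lc_core_compact d Hd).
  pose proof (core_compact_lc d Hd).
  tauto.
Qed.
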